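(* Let $A_1,A_2,A_3$ be $m\times m$ complex positive semidefinite matrices. Then $$\operatorname{per}(A_1+A_2+A_3)+\operatorname{per}A_1+\operatorname{per}A_2+\operatorname{per}A_3\;\ge\;\operatorname{per}(A_1+A_2)+\operatorname{per}(A_1+A_3)+\operatorname{per}(A_2+A_3).$$
   Context: The permanent of an $m\times m$ matrix $X=(x_{ij})$ is $\operatorname{per}X=\sum_{\sigma\in S_m}\prod_{t=1}^m x_{t\,\sigma(t)}$. *)

(* Complex numbers: an arbitrary numClosedFieldType C
   (e.g. algC); conjugation is Num.conj (notation z^* ). *)
From HB Require Import structures.
From mathcomp Require Import all_boot all_order all_algebra all_fingroup.
Set Implicit Arguments. Unset Strict Implicit. Unset Printing Implicit Defensive.
Import Order.TTheory GRing.Theory Num.Theory.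
Local Open Scope ring_scope.

Definition permanent (R : comNzRingType) (m : nat) (X : 'M[R]_m) : R :=
  \sum_(s : 'S_m) \prod_(t < m) X t (s t).

Definition adjmx (C : numClosedFieldType) (p q : nat) (A : 'M[C]_(p, q))
  : 'M[C]_(q, p) := \matrix_(i, j) (A j i)^*.

Definition psdmx (C : numClosedFieldType) (m : nat) (A : 'M[C]_m) : Prop :=
  adjmx A = A /\ forall x : 'cV[C]_m, 0 <= (adjmx x *m A *m x) 0 0.

From HB Require Import structures.
From mathcomp Require Import all_boot all_order all_algebra all_fingroup.
Import Order.TTheory GRing.Theory Num.Theory.
Local Open Scope ring_scope.

(* By multilinearity, m`! per (\sum_(k in S) A_k) = \sum_c N c, where c ranges
   over the maps 'I_m -> 'I_3 with values in S and N c is (m`! times) the mixed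
   permanent of A_(c 0), ..., A_(c (m-1)). Each N c is nonnegative: writing every
   A_i as P_i^* D_i P_i with D_i >= 0 diagonal turns N c into a sum of nonnegative
   weights times squared moduli. Hence m`! times the difference of the two sides
   is \sum_c e(c) N c, where e(c) is the number of sets among {1,2,3}, {1}, {2},
   {3} containing the image of c minus the number of such sets among {1,2},
   {1,3}, {2,3}; e(c) is 1 if c is onto or m = 0, and 0 otherwise. *)

(* m`! times the mixed permanent of F 0, ..., F (m-1). *)
Definition mixed_permanent {R : comNzRingType} {m : nat} (F : 'I_m -> 'M[R]_m) : R :=
  \sum_(s : 'S_m) \sum_(t : 'S_m) \prod_i F i (s i) (t i).

Section MixedPermanent.
Variables (R : comNzRingType) (m : nat).

Lemma mixed_permanent_const (X : 'M[R]_m) :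
  mixed_permanent (fun _ => X) = m`!%:R * permanent X.
Proof.
have row_shift (s : 'S_m) : \sum_(t : 'S_m) \prod_i X (s i) (t i) = permanent X.
  rewrite /permanent (reindex_inj (mulgI s)); apply: eq_bigr => t _.
  by rewrite [RHS](reindex_inj (@perm_inj _ s)); apply: eq_bigr => i _; rewrite permM.
by rewrite /mixed_permanent (eq_bigr _ (fun s _ => row_shift s)) sumr_const card_Sn mulr_natl.
Qed.

Lemma mixed_permanent_sum (I : finType) (P : pred I) (G : 'I_m -> I -> 'M[R]_m) :
  mixed_permanent (fun i => \sum_(k | P k) G i k) =
  \sum_(c in ffun_on P) mixed_permanent (fun i => G i (c i)).
Proof.
rewrite /mixed_permanent [RHS]exchange_big; apply: eq_bigr => s _.
rewrite [RHS]exchange_big; apply: eq_bigr => t _.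
under eq_bigr => i _ do rewrite summxE.
exact: bigA_distr_big.
Qed.

End MixedPermanent.

Section PositiveSemidefinite.
Variables (C : numClosedFieldType) (m : nat).

Lemma adjmxE p q (A : 'M[C]_(p, q)) : adjmx A = (A ^t*)%sesqui.
Proof. by apply/matrixP => i j; rewrite !mxE. Qed.

Lemma psdmx_gram {A : 'M[C]_m} : psdmx A ->
  exists (P : 'M[C]_m) (d : 'I_m -> C), (forall r, 0 <= d r) /\
    forall i j, A i j = \sum_r d r * ((P r i)^* * P r j).
Proof.
move=> [hermA psdA].
have normalA : A \is normalmx by apply/normalmxP; rewrite -adjmxE hermA.
have := orthomx_spectralP normalA.
set P := spectralmx A; set d := spectral_diag A.
have unitaryP : P \is unitarymx by exact: spectral_unitarymx.
rewrite invmx_unitary // => AE.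
exists P, (d 0); split=> [r|i j]; last first.
  rewrite AE mul_mx_diag !mxE; apply: eq_bigr => r _.
  by rewrite !mxE mulrCA mulrA.
have := psdA ((P ^t*)%sesqui *m delta_mx r 0).
have PPt : P *m (P ^t*)%sesqui = 1%:M by apply/unitarymxP.
rewrite adjmxE !trmx_mul !map_mxM trmxCK AE -!mulmxA !(mulmxA P _) PPt !mul1mx -colE.
rewrite !mxE (bigD1 r) //= big1 ?addr0 => [|k /negbTE kr].
  by rewrite !mxE !eqxx /= mulr1n rmorph1 mul1r.
by rewrite !mxE kr /= rmorph0 mul0r.
Qed.

Lemma mixed_permanent_gram {n} {F : 'I_m -> 'M[C]_m} {P : 'I_m -> 'M[C]_(n, m)}
    {d : 'I_m -> 'I_n -> C} :
  (forall i j k, F i j k = \sum_r d i r * ((P i r j)^* * P i r k)) ->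
  mixed_permanent F = \sum_(h : {ffun 'I_m -> 'I_n}) (\prod_i d i (h i)) *
    ((\sum_(s : 'S_m) \prod_i P i (h i) (s i))^* *
      \sum_(s : 'S_m) \prod_i P i (h i) (s i)).
Proof.
move=> FE; rewrite /mixed_permanent.
under eq_bigr => s _ do under eq_bigr => t _ do
  rewrite (eq_bigr _ (fun i _ => FE i (s i) (t i))) bigA_distr_bigA.
under eq_bigr => s _ do rewrite exchange_big.
rewrite exchange_big; apply: eq_bigr => h _.
rewrite rmorph_sum mulr_suml mulr_sumr; apply: eq_bigr => s _.
rewrite !mulr_sumr; apply: eq_bigr => t _.
by rewrite rmorph_prod !big_split.
Qed.

Lemma mixed_permanent_ge0 (F : 'I_m -> 'M[C]_m) :
  (forall i, psdmx (F i)) -> 0 <= mixed_permanent F.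
Proof.
move=> psdF; have [P gramF] := fin_all_exists (fun i => psdmx_gram (psdF i)).
have [d /all_and2[d_ge0 FE]] := fin_all_exists gramF.
rewrite (mixed_permanent_gram FE); apply: sumr_ge0 => h _.
by rewrite mulr_ge0 ?prodr_ge0 // mulrC mul_conjC_ge0.
Qed.

End PositiveSemidefinite.

Lemma permanent_sum (R : comNzRingType) m (I : finType) (P : pred I) (A : I -> 'M[R]_m) :
  m`!%:R * permanent (\sum_(k | P k) A k) =
  \sum_(c in ffun_on P) mixed_permanent (fun i => A (c i)).
Proof. by rewrite -mixed_permanent_const (@mixed_permanent_sum _ _ _ P (fun _ => A)). Qed.

Lemma ffun_on_andb (aT rT : finType) (P Q : pred rT) (f : {ffun aT -> rT}) :
  (f \in ffun_on (fun y => P y && Q y)) = (f \in ffun_on P) && (f \in ffun_on Q).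
Proof.
apply/ffun_onP/andP => [onPQ | [/ffun_onP onP /ffun_onP onQ] x].
  by split; apply/ffun_onP => x; have /andP[] := onPQ x.
by apply/andP; split; [apply: onP | apply: onQ].
Qed.

Lemma big_ord3_nth {V : nmodType} (a b c : V) (P : pred nat) :
  \sum_(k < 3 | P k) [:: a; b; c]`_k = a *+ P 0 + b *+ P 1 + c *+ P 2.
Proof. by rewrite big_mkcond !big_ord_recr big_ord0 /= add0r -!mulrb. Qed.

Lemma ler_incl_excl3 (R : numDomainType) (N : R) (x y z : bool) : 0 <= N ->
  N *+ x + N *+ y + N *+ z <= N + N *+ (x && y) + N *+ (x && z) + N *+ (y && z).
Proof.
move=> N_ge0; rewrite -[in leRHS](mulr1n N) -!mulrnDr.
by apply: ler_wpMn2l; case: x; case: y; case: z.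
Qed.

Theorem corollary3p3 (C : numClosedFieldType) (m : nat) (A1 A2 A3 : 'M[C]_m) :
  psdmx A1 -> psdmx A2 -> psdmx A3 ->
  permanent (A1 + A2) + permanent (A1 + A3) + permanent (A2 + A3)
  <= permanent (A1 + A2 + A3) + permanent A1 + permanent A2 + permanent A3.
Proof.
move=> psd1 psd2 psd3.
pose F (k : 'I_3) := [:: A1; A2; A3]`_k.
pose N (c : {ffun 'I_m -> 'I_3}) := mixed_permanent (fun i => F (c i)).
have N_ge0 c : 0 <= N c.
  by apply: mixed_permanent_ge0 => i; case: (c i) => [[|[|[|]]]].
have perE (P : pred 'I_3) : m`!%:R * permanent (\sum_(k | P k) F k) =
    \sum_c N c *+ (c \in ffun_on P).
  by rewrite permanent_sum big_mkcond; apply: eq_bigr => c _; rewrite mulrb.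
have -> : A1 + A2 + A3 = \sum_(k < 3) F k by rewrite (big_ord3_nth _ _ _ predT).
have -> : A1 + A2 = \sum_(k < 3 | k != 2) F k
  by rewrite (big_ord3_nth _ _ _ (fun k => k != 2)) /= addr0.
have -> : A1 + A3 = \sum_(k < 3 | k != 1) F k
  by rewrite (big_ord3_nth _ _ _ (fun k => k != 1)) /= addr0.
have -> : A2 + A3 = \sum_(k < 3 | k != 0) F k
  by rewrite (big_ord3_nth _ _ _ (fun k => k != 0)) /= add0r.
have -> : A1 = \sum_(k < 3 | (k != 2) && (k != 1)) F k
  by rewrite (big_ord3_nth _ _ _ (fun k => (k != 2) && (k != 1))) /= !addr0.
have -> : A2 = \sum_(k < 3 | (k != 2) && (k != 0)) F k
  by rewrite (big_ord3_nth _ _ _ (fun k => (k != 2) && (k != 0))) /= addr0 add0r.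
have -> : A3 = \sum_(k < 3 | (k != 1) && (k != 0)) F k
  by rewrite (big_ord3_nth _ _ _ (fun k => (k != 1) && (k != 0))) /= !add0r.
have mfact_gt0 : 0 < m`!%:R :> C by rewrite ltr0n fact_gt0.
rewrite -(ler_pM2l mfact_gt0) !mulrDr !perE -!big_split /=.
apply: ler_sum => c _; rewrite !ffun_on_andb.
have -> : c \in ffun_on xpredT by apply/ffun_onP.
exact: ler_incl_excl3.
Qed.
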